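(* For any two $n$-dimensional simplices $\triangle,\triangle'\subset\mathbb{R}^n$, $$\#\operatorname{vert}(\triangle\cap\triangle')\le\binom{2n+2}{n+2}.$$
   Context: $\operatorname{vert}(X)$ denotes the vertex set of a polytope $X$. *)

From HB Require Import structures.
From mathcomp Require Import all_boot all_order all_algebra.
From mathcomp Require Import reals.
Set Implicit Arguments. Unset Strict Implicit. Unset Printing Implicit Defensive.
Import Order.TTheory GRing.Theory Num.Theory.
Local Open Scope ring_scope.

Definition conv_hull (R : realType) (n k : nat) (v : 'I_k -> 'rV[R]_n)
  (x : 'rV[R]_n) : Prop :=
  exists l : 'I_k -> R, (forall i, 0 <= l i) /\ \sum_i l i = 1 /\
    x = \sum_i l i *: v i.

Definition affinely_independent (R : realType) (n k : nat)
  (v : 'I_k -> 'rV[R]_n) : Prop :=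
  forall l : 'I_k -> R, \sum_i l i = 0 -> \sum_i l i *: v i = 0 ->
    forall i, l i = 0.

Definition is_simplex (R : realType) (n : nat) (S : 'rV[R]_n -> Prop) : Prop :=
  exists v : 'I_n.+1 -> 'rV[R]_n, affinely_independent v /\
    (forall x, S x <-> conv_hull v x).

Definition is_vertex (R : realType) (n : nat) (X : 'rV[R]_n -> Prop)
  (x : 'rV[R]_n) : Prop :=
  X x /\ forall (y z : 'rV[R]_n) (t : R), X y -> X z -> 0 < t < 1 ->
    x = t *: y + (1 - t) *: z -> y = z.

From HB Require Import structures.
From mathcomp Require Import all_boot all_order all_algebra.
From mathcomp Require Import reals.
From mathcomp Require Import ring lra zify.
From Stdlib Require Import ClassicalEpsilon.
Import Order.TTheory GRing.Theory Num.Theory.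
Local Open Scope ring_scope.
Set Implicit Arguments. Unset Strict Implicit. Unset Printing Implicit Defensive.

(* A point x of S ∩ S' with barycentric coordinates l in S and l' in S' gives a
   nonnegative solution (l, l') of the linear system
     Σ l_i = 1,   Σ l'_i = 1,   Σ l_i v_i - Σ l'_i w_i = 0
   of n + 2 equations in 2n + 2 unknowns.  If x is a vertex, the columns of the
   system on the support of (l, l') are linearly independent, since a dependency
   among them would move x in both directions inside S ∩ S'.  The system has
   rank n + 2, so the support extends to a basis B of n + 2 columns, and x is the
   only point with a solution supported on B: distinct vertices get distinct
   (n + 2)-subsets of the 2n + 2 columns. *)

Section ColumnFamily.
Variables (F : fieldType) (I : finType) (m : nat) (c : I -> 'rV[F]_m).

Definition span_of (T : {set I}) := (\sum_(i in T) <<c i>>)%MS.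

Definition lin_indep (T : {set I}) := forall a : I -> F,
  (forall i, i \notin T -> a i = 0) -> \sum_i a i *: c i = 0 -> forall i, a i = 0.

Lemma sub_span_ofP (T : {set I}) (x : 'rV[F]_m) : (x <= span_of T)%MS ->
  exists2 a : I -> F, (forall i, i \notin T -> a i = 0) & x = \sum_i a i *: c i.
Proof.
case/sub_sums_genmxP => u ->.
exists (fun i => if i \in T then u i 0 0 else 0) => [i /negPf -> //|].
rewrite big_mkcond; apply: eq_bigr => i _.
by case: (i \in T); rewrite ?scale0r // {1}(mx11_scalar (u i)) mul_scalar_mx.
Qed.

Lemma comb_sub_span_of (T : {set I}) (a : I -> F) :
  (forall i, i \notin T -> a i = 0) -> ((\sum_i a i *: c i)%R <= span_of T)%MS.
Proof.
move=> aT; apply: summx_sub => i _; have [iT|/aT ->] := boolP (i \in T).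
  by apply/scalemx_sub/(sumsmx_sup i); rewrite ?genmxE.
by rewrite scale0r sub0mx.
Qed.

Lemma span_ofS (T T' : {set I}) : T \subset T' -> (span_of T <= span_of T')%MS.
Proof.
move=> sTT'; apply/sumsmx_subP => i iT.
by apply: (sumsmx_sup i) => //; apply: (subsetP sTT').
Qed.

Lemma rank_span_of_leq (T : {set I}) : (\rank (span_of T) <= #|T|)%N.
Proof.
rewrite /span_of -sum1_card.
elim/big_rec2: _ => [|i k A _ IH]; first by rewrite mxrank0.
apply: leq_trans (mxrank_adds_leqif _ _).1 _.
by rewrite leq_add // genmxE rank_leq_row.
Qed.

Lemma lin_indepS (T T' : {set I}) : T' \subset T -> lin_indep T -> lin_indep T'.
Proof.
move=> sT'T iT a aT'; apply: iT => i iT; apply: aT'.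
by apply: contra iT; apply: (subsetP sT'T).
Qed.

Lemma lin_indep_notin_span (T : {set I}) k :
  lin_indep T -> k \in T -> ~~ (c k <= span_of (T :\ k))%MS.
Proof.
move=> iT kT; apply/negP => /sub_span_ofP [a aTk ck].
pose b i := a i - (i == k)%:R.
suff : b k = 0.
  by rewrite /b aTk ?setD11 // eqxx sub0r => /eqP; rewrite oppr_eq0 oner_eq0.
apply: iT => [i iT|].
  have /negPf ik : i != k by apply: contraNneq iT => ->.
  by rewrite /b ik aTk ?subr0 // in_setD1 (negPf iT) andbF.
under eq_bigr do rewrite scalerBl.
rewrite sumrB -ck [X in _ - X](bigD1 k) //= eqxx scale1r big1 ?addr0 ?subrr //.
by move=> i /negPf ->; rewrite scale0r.
Qed.

Lemma rank_span_of_indep (T : {set I}) : lin_indep T -> \rank (span_of T) = #|T|.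
Proof.
have [N] := ubnP #|T|; elim: N T => // N IH T.
have [-> _ _|[k kT] ltTN iT] := set_0Vmem T.
  by rewrite /span_of big_set0 mxrank0 cards0.
have cardT : #|T| = #|T :\ k|.+1 by rewrite (cardsD1 k T) kT.
have rankTk : \rank (span_of (T :\ k)) = #|T :\ k|.
  by apply: IH; [rewrite -ltnS -cardT | apply: lin_indepS iT; apply: subsetDl].
have : (span_of (T :\ k) < span_of T)%MS.
  rewrite ltmxE span_ofS ?subsetDl //= /span_of (bigD1 k) //= addsmx_sub negb_and.
  by rewrite genmxE lin_indep_notin_span.
rewrite ltmxErank rankTk -cardT => /andP [_ ltT].
by apply/eqP; rewrite eqn_leq rank_span_of_leq.
Qed.

Lemma lin_indepU1 (T : {set I}) j :
  lin_indep T -> ~~ (c j <= span_of T)%MS -> lin_indep (j |: T).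
Proof.
move=> iT cjT a ajT sa0.
pose b i := if i == j then 0 else a i.
have bT i : i \notin T -> b i = 0.
  rewrite /b; case: eqP => // /eqP ij iT'.
  by apply: ajT; rewrite in_setU1 negb_or ij.
have sa : \sum_i a i *: c i = a j *: c j + \sum_i b i *: c i.
  rewrite [in RHS](bigD1 j) //= {1}/b eqxx scale0r add0r (bigD1 j) //=.
  by congr (_ + _); apply: eq_bigr => i /negPf ij; rewrite /b ij.
have aj0 : a j = 0.
  apply/eqP; apply: contraNT cjT => aj0.
  have -> : c j = - (a j)^-1 *: \sum_i b i *: c i.
    apply: (scalerI aj0); rewrite scalerA mulrN mulfV // scaleN1r.
    by apply/eqP; rewrite -addr_eq0 -sa sa0.
  by apply/scalemx_sub/comb_sub_span_of.
have b0 := iT b bT; rewrite sa aj0 scale0r add0r in sa0.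
by move=> i; have := b0 sa0 i; rewrite /b; case: eqP => // ->.
Qed.

Lemma lin_indep_extend (T : {set I}) : lin_indep T ->
  exists B : {set I}, [/\ T \subset B, lin_indep B & #|B| = \rank (span_of setT)].
Proof.
have [N] := ubnP (\rank (span_of setT) - #|T|); elim: N T => // N IH T ltN iT.
have leT : (#|T| <= \rank (span_of setT))%N.
  by rewrite -(rank_span_of_indep iT) mxrankS // span_ofS ?subsetT.
have [eqT|ltT] := eqVneq #|T| (\rank (span_of setT)); first by exists T.
have [j cjT|spanT] := pickP (fun j => ~~ (c j <= span_of T)%MS).
  have jT : j \notin T.
    by apply: contra cjT => jT; apply: (sumsmx_sup j); rewrite ?genmxE.
  have ltN' : (\rank (span_of setT) - #|j |: T| < N)%N.
    by rewrite cardsU1 jT; move: ltN leT ltT; lia.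
  have [B [sB iB cardB]] := IH (j |: T) ltN' (lin_indepU1 iT cjT).
  by exists B; split=> //; apply: subset_trans sB; apply: subsetUr.
suff : (\rank (span_of setT) <= #|T|)%N by move: leT ltT; lia.
rewrite -(rank_span_of_indep iT) mxrankS //.
by apply/sumsmx_subP => i _; rewrite genmxE; move/negbFE: (spanT i).
Qed.

End ColumnFamily.

Lemma small_perturbation (R : realFieldType) (I : finType) (a c : I -> R) :
  (forall i, 0 <= a i) -> (forall i, a i = 0 -> c i = 0) ->
  exists2 e : R, 0 < e & forall i, `|e * c i| <= a i.
Proof.
move=> a_ge0 ca.
pose K := \sum_(i | a i != 0) `|c i| / a i.
have K_ge0 : 0 <= K by apply: sumr_ge0 => i _; rewrite divr_ge0.
exists (K + 1)^-1 => [|i]; first by rewrite invr_gt0; lra.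
have [ai0|ai_neq0] := eqVneq (a i) 0; first by rewrite ca // mulr0 normr0 ai0.
have ai_gt0 : 0 < a i by rewrite lt_def ai_neq0 a_ge0.
have : `|c i| / a i <= K.
  by rewrite /K (bigD1 i) //= lerDl sumr_ge0 // => j _; rewrite divr_ge0.
rewrite ler_pdivrMr // => cK.
by rewrite normrM gtr0_norm ?invr_gt0 ?ltr_pwDr // mulrC ler_pdivrMr; nra.
Qed.

Lemma conv_hull_perturb (R : realType) n k (v : 'I_k -> 'rV[R]_n) (l d : 'I_k -> R) :
  (forall i, `|d i| <= l i) -> \sum_i l i = 1 -> \sum_i d i = 0 ->
  conv_hull v (\sum_i l i *: v i + \sum_i d i *: v i) /\
  conv_hull v (\sum_i l i *: v i - \sum_i d i *: v i).
Proof.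
move=> dl l1 d0; split.
- exists (fun i => l i + d i); split=> [i|]; first by move: (dl i); rewrite ler_norml; lra.
  rewrite big_split /= l1 d0 addr0 -big_split; split=> //.
  by apply: eq_bigr => i; rewrite scalerDl.
- exists (fun i => l i - d i); split=> [i|]; first by move: (dl i); rewrite ler_norml; lra.
  rewrite sumrB l1 d0 subr0 -sumrB; split=> //.
  by apply: eq_bigr => i; rewrite scalerBl.
Qed.

Lemma vertex_midpoint (R : realType) n (X : 'rV[R]_n -> Prop) (x d : 'rV[R]_n) :
  is_vertex X x -> X (x + d) -> X (x - d) -> d = 0.
Proof.
case=> _ ext Xp Xm.
have half : 0 < (2^-1 : R) < 1 by apply/andP; split; lra.
have /(ext _ _ _ Xp Xm half) : x = 2^-1 *: (x + d) + (1 - 2^-1) *: (x - d).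
  have -> : (1 - 2^-1 : R) = 2^-1 by field.
  rewrite -scalerDr addrACA subrr addr0 -mulr2n -scaler_nat scalerA.
  by rewrite mulVf ?pnatr_eq0 ?scale1r.
move/addrI/eqP; rewrite -subr_eq0 opprK -mulr2n -scaler_nat scaler_eq0 pnatr_eq0 /=.
by move/eqP.
Qed.

Lemma sum_row_mx (R : nmodType) (I : finType) m n1 n2
    (A : I -> 'M[R]_(m, n1)) (B : I -> 'M[R]_(m, n2)) :
  \sum_i row_mx (A i) (B i) = row_mx (\sum_i A i) (\sum_i B i).
Proof. by elim/big_rec3: _ => [|i x y z _ ->]; rewrite ?row_mx0 ?add_row_mx. Qed.

Section IntersectionVertices.
Variables (R : realType) (n : nat) (v w : 'I_n.+1 -> 'rV[R]_n).
Local Notation J := ('I_n.+1 + 'I_n.+1)%type.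

(* One unknown per vertex: [inl i] weighs v i and [inr i] weighs w i. *)
Definition stacked (alpha beta : R) (z : 'rV[R]_n) : 'rV[R]_(2 + n) :=
  row_mx (alpha *: delta_mx 0 0 + beta *: delta_mx 0 1) z.

Definition column (j : J) : 'rV[R]_(2 + n) :=
  match j with inl i => stacked 1 0 (v i) | inr i => stacked 0 1 (- w i) end.

Lemma stacked_inj alpha beta z alpha' beta' z' :
  stacked alpha beta z = stacked alpha' beta' z' ->
  [/\ alpha = alpha', beta = beta' & z = z'].
Proof.
case/eq_row_mx => /rowP e ->; split=> //.
  by have := e 0; rewrite !mxE /= !mulr1 !mulr0 !addr0.
by have := e 1; rewrite !mxE /= !mulr1 !mulr0 !add0r.
Qed.

Lemma stacked0 : stacked 0 0 0 = 0.
Proof. by rewrite /stacked !scale0r addr0 row_mx0. Qed.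

Lemma comb_columnE (a : J -> R) : \sum_j a j *: column j =
  stacked (\sum_i a (inl i)) (\sum_i a (inr i))
          (\sum_i a (inl i) *: v i - \sum_i a (inr i) *: w i).
Proof.
rewrite big_sumType /= /stacked.
under eq_bigr do rewrite scale_row_mx scalerDr !scalerA mulr1 mulr0 scale0r addr0.
under [X in _ + X]eq_bigr
  do rewrite scale_row_mx scalerDr !scalerA mulr1 mulr0 scale0r add0r scalerN.
by rewrite !sum_row_mx add_row_mx -!scaler_suml sumrN.
Qed.

Lemma comb_column_stacked (a : J -> R) alpha beta :
  \sum_j a j *: column j = stacked alpha beta 0 <->
  [/\ \sum_i a (inl i) = alpha, \sum_i a (inr i) = beta &
      \sum_i a (inl i) *: v i = \sum_i a (inr i) *: w i].
Proof.
rewrite comb_columnE; split => [/stacked_inj [-> -> /eqP]|[-> -> ->]].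
  by rewrite subr_eq0 => /eqP.
by rewrite subrr.
Qed.

Definition basic_columns : {set J} := inr ord0 |: [set inl i | i : 'I_n.+1].

Lemma card_basic_columns : #|basic_columns| = n.+2.
Proof.
rewrite cardsU1 card_imset ?card_ord; last by move=> i i' [].
suff -> : (inr ord0 : J) \notin [set inl i | i : 'I_n.+1] by [].
by apply/negP => /imsetP [].
Qed.

Hypothesis hv : affinely_independent v.

Lemma lin_indep_basic_columns : lin_indep column basic_columns.
Proof.
move=> a a_basic.
rewrite -[X in _ = X]stacked0 => /comb_column_stacked [al ar avw].
have ar0 i : a (inr i) = 0.
  suff a_off0 k : k != ord0 -> a (inr k) = 0.
    have [-> |/a_off0 //] := eqVneq i ord0.
    by rewrite -ar (bigD1 ord0) //= big1 ?addr0.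
  move=> k0; apply: a_basic; rewrite !inE negb_or; apply/andP; split.
    by apply: contra k0 => /eqP [->].
  by apply/negP => /imsetP [].
have al0 : forall i, a (inl i) = 0.
  by apply: hv => //; rewrite avw big1 // => i _; rewrite ar0 scale0r.
by case.
Qed.

Lemma rank_columns : \rank (span_of column setT) = n.+2.
Proof.
apply/eqP; rewrite eqn_leq rank_leq_col -{1}card_basic_columns.
by rewrite -(rank_span_of_indep lin_indep_basic_columns) mxrankS ?span_ofS ?subsetT.
Qed.

Definition represents (x : 'rV[R]_n) (B : {set J}) := lin_indep column B /\
  exists a : J -> R, [/\ forall j, j \notin B -> a j = 0,
    \sum_j a j *: column j = stacked 1 1 0 & x = \sum_i a (inl i) *: v i].

Lemma represents_inj x y B : represents x B -> represents y B -> x = y.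
Proof.
case=> iB [a [aB ab ->]] [_ [a' [a'B a'b ->]]].
have eq_a j : a j - a' j = 0.
  apply: (iB (fun k => a k - a' k)) => [k kB|]; first by rewrite aB ?a'B ?subr0.
  by under eq_bigr do rewrite scalerBl; rewrite sumrB ab a'b subrr.
by apply: eq_bigr => i _; apply/eqP; rewrite -subr_eq0 -scalerBl eq_a scale0r.
Qed.

Hypothesis hw : affinely_independent w.
Variables S S' : 'rV[R]_n -> Prop.
Hypotheses (hS : forall x, S x <-> conv_hull v x)
           (hS' : forall x, S' x <-> conv_hull w x).

Lemma vertex_support_indep x (a : J -> R) :
  is_vertex (fun y => S y /\ S' y) x -> (forall j, 0 <= a j) ->
  \sum_j a j *: column j = stacked 1 1 0 -> x = \sum_i a (inl i) *: v i ->
  lin_indep column [set j | a j != 0].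
Proof.
move=> vx a_ge0 /comb_column_stacked [al ar avw] xE c c_supp.
rewrite -[X in _ = X]stacked0 => /comb_column_stacked [cl cr cvw].
have [e e_gt0 ec] : exists2 e : R, 0 < e & forall j, `|e * c j| <= a j.
  by apply: small_perturbation => // j aj0; apply: c_supp; rewrite inE aj0 eqxx.
have sum_e (f : 'I_n.+1 -> R) : \sum_i f i = 0 -> \sum_i e * f i = 0.
  by rewrite -mulr_sumr => ->; rewrite mulr0.
have scale_e (f : 'I_n.+1 -> R) (u : 'I_n.+1 -> 'rV[R]_n) :
    \sum_i (e * f i) *: u i = e *: \sum_i f i *: u i.
  by rewrite scaler_sumr; apply: eq_bigr => i _; rewrite scalerA.
have [Sp Sm] := conv_hull_perturb v (fun i => ec (inl i)) al (sum_e _ cl).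
have [S'p S'm] := conv_hull_perturb w (fun i => ec (inr i)) ar (sum_e _ cr).
rewrite scale_e -xE in Sp Sm; rewrite scale_e -cvw -avw -xE in S'p S'm.
have /eqP : e *: \sum_i c (inl i) *: v i = 0.
  by apply: (vertex_midpoint vx); split; first [apply/hS | apply/hS'].
rewrite scaler_eq0 gt_eqF //= => /eqP cv0.
have cl0 := hv cl cv0.
have cr0 : forall i, c (inr i) = 0 by apply: hw; rewrite -?cvw.
by case.
Qed.

Lemma vertex_represented x :
  is_vertex (fun y => S y /\ S' y) x ->
  exists2 B : {set J}, #|B| = n.+2 & represents x B.
Proof.
move=> vx; case: (vx) => -[/hS [l [l_ge0 [l1 xl]]] /hS' [l' [l'_ge0 [l'1 xl']]]] _.
pose a (j : J) := match j with inl i => l i | inr i => l' i end.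
have a_ge0 : forall j, 0 <= a j by case.
have a_sol : \sum_j a j *: column j = stacked 1 1 0.
  by apply/comb_column_stacked; split; rewrite // -xl -xl'.
have [B [suppB iB]] := lin_indep_extend (vertex_support_indep vx a_ge0 a_sol xl).
rewrite rank_columns => cardB; exists B => //; split=> //.
exists a; split=> // j jB.
by apply/eqP; apply: contraNT jB => aj; apply: (subsetP suppB); rewrite inE.
Qed.

End IntersectionVertices.

Lemma size_leq_bin_of_sets (T : eqType) (I : finType) k
    (P : T -> {set I} -> Prop) (s : seq T) :
  uniq s -> (forall x, x \in s -> exists2 B : {set I}, #|B| = k & P x B) ->
  (forall x y B, P x B -> P y B -> x = y) -> (size s <= 'C(#|I|, k))%N.
Proof.
move=> s_uniq sP P_inj.
have choiceP x : exists B : {set I}, x \in s -> #|B| = k /\ P x B.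
  have [/sP [B cardB PB]|_] := boolP (x \in s); first by exists B.
  by exists set0.
pose f x := proj1_sig (constructive_indefinite_description _ (choiceP x)).
have fP x : x \in s -> #|f x| = k /\ P x (f x).
  exact: proj2_sig (constructive_indefinite_description _ (choiceP x)).
have f_inj : {in s &, injective f}.
  move=> x y xs ys fxy; apply: (P_inj x y (f x)); first by case: (fP x xs).
  by rewrite fxy; case: (fP y ys).
rewrite -card_draws -(size_map f) -(card_uniqP _); last by rewrite map_inj_in_uniq.
by apply/subset_leq_card/subsetP => _ /mapP [x xs ->]; rewrite inE (fP x xs).1.
Qed.

Theorem lemma5p3 (R : realType) (n : nat) (S S' : 'rV[R]_n -> Prop) :
  is_simplex S -> is_simplex S' ->
  forall s : seq 'rV[R]_n, uniq s ->
    (forall x, x \in s -> is_vertex (fun y => S y /\ S' y) x) ->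
    (size s <= 'C(2 * n + 2, n + 2))%N.
Proof.
move=> [v [hv hS]] [w [hw hS']] s s_uniq s_vert.
have -> : (2 * n + 2 = #|{: 'I_n.+1 + 'I_n.+1}|)%N by rewrite card_sum !card_ord; lia.
apply: (size_leq_bin_of_sets (P := represents v w)) => // [x xs|].
  by have [B] := vertex_represented hv hw hS hS' (s_vert x xs); rewrite -addn2; exists B.
exact: represents_inj.
Qed.
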